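(* Assume that $q$ is not a root of unity. Then the center $Z(\Delta)$ is generated (as an $\mathbb F$-algebra) by $\Omega,\alpha,\beta,\gamma$.
   Context: Let $\mathbb F$ be a field and fix a nonzero $q\in\mathbb F$ with $q^4\neq 1$. The universal Askey--Wilson algebra $\Delta$ is the associative $\mathbb F$-algebra with 1 with generators $A,B,C$ subject to the relations that each of $A+\frac{qBC-q^{-1}CB}{q^2-q^{-2}}$, $B+\frac{qCA-q^{-1}AC}{q^2-q^{-2}}$, $C+\frac{qAB-q^{-1}BA}{q^2-q^{-2}}$ is central; $\alpha,\beta,\gamma$ denote these three central elements (in order) each multiplied by $q+q^{-1}$. Let $\Omega = qABC+q^2A^2+q^{-2}B^2+q^2C^2-qA\alpha-q^{-1}B\beta-qC\gamma$. *)

From HB Require Import structures.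
From mathcomp Require Import all_boot all_order all_algebra.
Set Implicit Arguments. Unset Strict Implicit. Unset Printing Implicit Defensive.
Import GRing.Theory.
Local Open Scope ring_scope.

Definition central (D : nzRingType) (x : D) : Prop := forall y : D, x * y = y * x.

Section AW.
Variables (F : fieldType) (q : F).

Definition aw_cA (D : algType F) (A B C : D) : D :=
  A + (q ^+ 2 - q ^- 2)^-1 *: (q *: (B * C) - q^-1 *: (C * B)).
Definition aw_cB (D : algType F) (A B C : D) : D :=
  B + (q ^+ 2 - q ^- 2)^-1 *: (q *: (C * A) - q^-1 *: (A * C)).
Definition aw_cC (D : algType F) (A B C : D) : D :=
  C + (q ^+ 2 - q ^- 2)^-1 *: (q *: (A * B) - q^-1 *: (B * A)).

Definition aw_alpha (D : algType F) (A B C : D) : D := (q + q^-1) *: aw_cA A B C.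
Definition aw_beta  (D : algType F) (A B C : D) : D := (q + q^-1) *: aw_cB A B C.
Definition aw_gamma (D : algType F) (A B C : D) : D := (q + q^-1) *: aw_cC A B C.

Definition aw_Omega (D : algType F) (A B C : D) : D :=
  q *: (A * B * C) + q ^+ 2 *: (A * A) + q ^- 2 *: (B * B) + q ^+ 2 *: (C * C)
  - q *: (A * aw_alpha A B C) - q^-1 *: (B * aw_beta A B C)
  - q *: (C * aw_gamma A B C).

Definition AW_rels (D : algType F) (A B C : D) : Prop :=
  [/\ central (aw_cA A B C), central (aw_cB A B C) & central (aw_cC A B C)].

Definition alg_hom (D E : algType F) (f : D -> E) : Prop :=
  [/\ forall x y, f (x + y) = f x + f y,
      forall x y, f (x * y) = f x * f y,
      f 1 = 1 & forall (k : F) x, f (k *: x) = k *: f x].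

End AW.

Inductive in_subalg (F : fieldType) (D : algType F) (gens : seq D) : D -> Prop :=
  | sa_gen x : x \in gens -> in_subalg gens x
  | sa_one : in_subalg gens 1
  | sa_add x y : in_subalg gens x -> in_subalg gens y -> in_subalg gens (x + y)
  | sa_mul x y : in_subalg gens x -> in_subalg gens y -> in_subalg gens (x * y)
  | sa_scale (k : F) x : in_subalg gens x -> in_subalg gens (k *: x).

(* (D, A, B, C) is the universal Askey--Wilson algebra Delta: the relations
   hold, D is generated by A, B, C, and for every F-algebra E with elements
   a, b, c satisfying the relations there is an algebra homomorphism D -> E
   sending A, B, C to a, b, c (unique, since A, B, C generate D).  This
   characterizes Delta up to isomorphism. *)
Definition is_universal_AW (F : fieldType) (q : F) (D : algType F) (A B C : D) : Prop :=
  [/\ AW_rels q A B C,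
      forall x : D, in_subalg [:: A; B; C] x &
      forall (E : algType F) (a b c : E), AW_rels q a b c ->
        exists f : D -> E, [/\ alg_hom f, f A = a, f B = b & f C = c]].

From HB Require Import structures.
From mathcomp Require Import all_boot all_order all_algebra.
From mathcomp Require Import ring.
From mathcomp.classical Require boolp.
From mathcomp.multinomials Require Import ssrcomplements mpoly.
Import GRing.Theory.
Local Open Scope ring_scope.

Set Implicit Arguments. Unset Strict Implicit. Unset Printing Implicit Defensive.

(* The normal-ordering relations rewrite every word in A, B, C, alpha, beta, gamma
   as a combination of ordered monomials A^a B^b C^c alpha^i beta^j gamma^k modulo
   shorter words, and the action of Delta on F[x_A, ..., x_gamma] sending the ordered
   monomial with exponents m to x^m shows that these monomials are independent.
   Commuting a central z with A and with C multiplies each top-degree monomial of z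
   by q^(2b - 2c), resp. q^(2a - 2b), so since q is not a root of unity only a = b = c
   survives; as the leading term of Omega is q ABC, such a monomial is a nonzero
   multiple of Omega^a alpha^i beta^j gamma^k modulo lower degree, and induction on
   the degree puts z in the subalgebra generated by Omega, alpha, beta, gamma.
   Conversely Omega commutes with A, and with B and C by cyclic symmetry. *)

Section LinearTerms.
Variables (K : fieldType) (M : lmodType K).

Inductive lterm : Type :=
  LVar of nat | LZero | LAdd of lterm & lterm | LOpp of lterm | LScale of K & lterm.

Fixpoint lterm_eval (env : seq M) (e : lterm) : M :=
  match e with
  | LVar i => env`_i
  | LZero => 0
  | LAdd a b => lterm_eval env a + lterm_eval env b
  | LOpp a => - lterm_eval env a
  | LScale c a => c *: lterm_eval env a
  end.

Fixpoint lterm_coef (e : lterm) (j : nat) : K :=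
  match e with
  | LVar i => if i == j then 1 else 0
  | LZero => 0
  | LAdd a b => lterm_coef a j + lterm_coef b j
  | LOpp a => - lterm_coef a j
  | LScale c a => c * lterm_coef a j
  end.

Lemma lterm_evalE env e :
  lterm_eval env e = \sum_(j < size env) lterm_coef e j *: env`_j.
Proof.
elim: e => [i||a IHa b IHb|a IHa|c a IHa] /=.
- have [lt_i|le_i] := ltnP i (size env); last first.
    rewrite nth_default // big1 // => j _; case: eqP => [ei|]; rewrite ?scale0r //.
    by move: (ltn_ord j); rewrite -ei ltnNge le_i.
  rewrite (bigD1 (Ordinal lt_i)) //= eqxx scale1r big1 ?addr0 // => j /eqP nij.
  by case: eqP => [ei|]; rewrite ?scale0r //; case: nij; apply: val_inj.
- by rewrite big1 // => j _; rewrite scale0r.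
- by rewrite IHa IHb -big_split; apply: eq_bigr => j _; rewrite scalerDl.
- by rewrite IHa -sumrN; apply: eq_bigr => j _; rewrite scaleNr.
- by rewrite IHa scaler_sumr; apply: eq_bigr => j _; rewrite scalerA.
Qed.

(* A Prop conjunction that [cbv] unfolds into one goal per index. *)
Fixpoint all_below (N : nat) (P : nat -> Prop) : Prop :=
  if N is N'.+1 then all_below N' P /\ P N' else True.

Lemma all_belowP N P : all_below N P -> forall j, (j < N)%N -> P j.
Proof.
elim: N => [//|N IH] /= [hN hP] j; rewrite ltnS leq_eqVlt.
by case/orP => [/eqP -> //|]; apply: IH.
Qed.

Lemma lterm_eval_eq env e1 e2 :
  all_below (size env) (fun j => lterm_coef e1 j = lterm_coef e2 j) ->
  lterm_eval env e1 = lterm_eval env e2.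
Proof.
by move/all_belowP=> eq12; rewrite !lterm_evalE; apply: eq_bigr => j _; rewrite eq12.
Qed.

End LinearTerms.

Ltac lin_same x y := constr:(ltac:(first [unify x y; exact true | exact false]) : bool).

Ltac lin_mem x env :=
  lazymatch env with
  | nil => constr:(false)
  | ?y :: ?env' => lazymatch lin_same x y with
                   | true => constr:(true)
                   | false => lin_mem x env'
                   end
  end.

Ltac lin_index x env :=
  lazymatch env with
  | ?y :: ?env' => lazymatch lin_same x y with
                   | true => constr:(0%N)
                   | false => let n := lin_index x env' in constr:(n.+1)
                   end
  end.

Ltac lin_snoc env x :=
  lazymatch env with
  | nil => constr:(x :: nil)
  | ?y :: ?env' => let env'' := lin_snoc env' x in constr:(y :: env'')
  end.

Ltac lin_atoms t env :=
  lazymatch t with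
  | (?a + ?b)%R => let env := lin_atoms a env in lin_atoms b env
  | (- ?a)%R => lin_atoms a env
  | (?c *: ?a)%R => lin_atoms a env
  | 0%R => env
  | _ => lazymatch lin_mem t env with
         | true => env
         | false => lin_snoc env t
         end
  end.

Ltac lin_reify K t env :=
  lazymatch t with
  | (?a + ?b)%R => let ea := lin_reify K a env in let eb := lin_reify K b env in
                   constr:(@LAdd K ea eb)
  | (- ?a)%R => let ea := lin_reify K a env in constr:(@LOpp K ea)
  | (?c *: ?a)%R => let ea := lin_reify K a env in constr:(@LScale K c ea)
  | 0%R => constr:(@LZero K)
  | _ => let i := lin_index t env in constr:(@LVar K i)
  end.

(* Proves [l = r] in a K-module by comparing the coefficients of every
   maximal non-linear subterm; leaves one scalar equation per such atom. *)
Ltac lin_coef K :=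
  lazymatch goal with
  | |- @eq ?T ?l ?r =>
    let env0 := lin_atoms l (@nil T) in
    let env := lin_atoms r env0 in
    let e1 := lin_reify K l env in
    let e2 := lin_reify K r env in
    apply: (@lterm_eval_eq K T env e1 e2); cbv [all_below lterm_coef size];
    rewrite ?eqnE /=
  end.

(** * The polynomial representation *)

Section LinearExtension.
Variables (F : fieldType) (n : nat).
Local Notation V := {mpoly F[n]}.

Definition linext (g : 'X_{1..n} -> V) (p : V) : V := \sum_(m <- msupp p) p@_m *: g m.

Lemma linextE g k p : (msize p <= k)%N ->
  linext g p = \sum_(m : 'X_{1..n < k}) p@_m *: g m.
Proof.
move=> le_pk; rewrite /linext (big_mksub 'X_{1..n < k}) ?msupp_uniq //=; last first.
  by move=> m /msize_mdeg_lt /leq_trans; apply.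
by rewrite big_rmcond //= => m /memN_msupp_eq0 ->; rewrite scale0r.
Qed.

Lemma linextD g : {morph linext g : x y / x + y}.
Proof.
move=> x y; set k := maxn (msize x) (msize y).
have le_x : (msize x <= k)%N by rewrite leq_maxl.
have le_y : (msize y <= k)%N by rewrite leq_maxr.
have le_xy : (msize (x + y) <= k)%N by apply: leq_trans (msizeD_le _ _) _.
rewrite !(linextE g le_x, linextE g le_y, linextE g le_xy) -big_split /=.
by apply: eq_bigr => m _; rewrite mcoeffD scalerDl.
Qed.

Lemma linextZ g c x : linext g (c *: x) = c *: linext g x.
Proof.
rewrite (linextE g (leqnn (msize x))) (linextE g (msizeZ_le x c)) scaler_sumr.
by apply: eq_bigr => m _; rewrite mcoeffZ scalerA.
Qed.

Lemma linext_sum g I (r : seq I) (P : pred I) (f : I -> V) :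
  linext g (\sum_(i <- r | P i) f i) = \sum_(i <- r | P i) linext g (f i).
Proof.
elim: r => [|a r IH]; first by rewrite !big_nil /linext msupp0 big_nil.
by rewrite !big_cons; case: (P a); rewrite ?linextD IH.
Qed.

Lemma linextX g m : linext g 'X_[m] = g m.
Proof. by rewrite /linext msuppX big_seq1 mcoeffX eqxx scale1r. Qed.

Lemma eq_linext g g' p : {in msupp p, g =1 g'} -> linext g p = linext g' p.
Proof. by move=> eq_g; apply: eq_big_seq => m /eq_g ->. Qed.

Lemma linext_mulX g (k : 'I_n) (v : V) :
  {in msupp v, forall m, g (m + U_(k))%MM = 'X_k * g m} ->
  linext g ('X_k * v) = 'X_k * linext g v.
Proof.
move=> gX; rewrite {1}[v]mpolyE mulr_sumr linext_sum mulr_sumr.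
apply: eq_big_seq => m m_v; rewrite -scalerAr linextZ -mpolyXD addmC linextX gX //.
by rewrite scalerAr.
Qed.

Lemma msize_linext g p k :
  (forall m, m \in msupp p -> (msize (g m) <= mdeg m + k.+1)%N) ->
  (msize (linext g p) <= msize p + k)%N.
Proof.
move=> size_g; apply: leq_trans (msize_sum _ _ _) _.
apply/bigmax_leqP_seq => m m_p _; apply: leq_trans (msizeZ_le _ _) _.
apply: leq_trans (size_g m m_p) _; rewrite addnS -addSn leq_add2r.
exact: msize_mdeg_lt.
Qed.

Lemma additive_eq_on_monomials (f1 f2 : V -> V) :
  (forall x y, f1 (x + y) = f1 x + f1 y) -> (forall c x, f1 (c *: x) = c *: f1 x) ->
  (forall x y, f2 (x + y) = f2 x + f2 y) -> (forall c x, f2 (c *: x) = c *: f2 x) ->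
  (forall m, f1 'X_[m] = f2 'X_[m]) -> f1 =1 f2.
Proof.
have sum_map (f : V -> V) :
    (forall x y, f (x + y) = f x + f y) -> (forall c x, f (c *: x) = c *: f x) ->
    forall (r : seq 'X_{1..n}) (h : 'X_{1..n} -> V),
    f (\sum_(m <- r) h m) = \sum_(m <- r) f (h m).
  move=> fD fZ r h; elim: r => [|a r IH]; last by rewrite !big_cons fD IH.
  by rewrite !big_nil; have := fZ 0 0; rewrite !scale0r.
move=> D1 Z1 D2 Z2 eqX x; rewrite [x]mpolyE (sum_map _ D1 Z1) (sum_map _ D2 Z2).
by apply: eq_bigr => m _; rewrite Z1 Z2 eqX.
Qed.

End LinearExtension.

Lemma msize_mulX (R : idomainType) n (i : 'I_n) (v : {mpoly R[n]}) :
  (msize ('X_i * v) <= (msize v).+1)%N.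
Proof.
have [->|nz_v] := eqVneq v 0; first by rewrite mulr0 msize0.
have nz_X : ('X_i : {mpoly R[n]}) != 0 by rewrite -msize_poly_eq0 msizeX.
by rewrite msizeM // msizeX mdeg1.
Qed.

Lemma msize_add3_le (R : ringType) n (u v w : {mpoly R[n]}) k :
  (msize u <= k)%N -> (msize v <= k)%N -> (msize w <= k)%N -> (msize (u + v + w) <= k)%N.
Proof.
move=> su sv sw; apply: leq_trans (msizeD_le _ _) _; rewrite geq_max sw andbT.
by apply: leq_trans (msizeD_le _ _) _; rewrite geq_max su sv.
Qed.

Lemma msize_scale_mulX (R : idomainType) n c (i : 'I_n) (v : {mpoly R[n]}) k :
  (msize v <= k)%N -> (msize (c *: ('X_i * v)) <= k.+1)%N.
Proof. by move=> sv; rewrite (leq_trans (msizeZ_le _ _)) // (leq_trans (msize_mulX _ _)). Qed.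

Lemma mdeg_addU n (m : 'X_{1..n}) (i : 'I_n) : mdeg (m + U_(i))%MM = (mdeg m).+1.
Proof. by rewrite mdegD mdeg1 addn1. Qed.

Lemma mnm_splitU n (m : 'X_{1..n}) (i : 'I_n) :
  m i = 0%N \/ exists2 m', m = (m' + U_(i))%MM & mdeg m = (mdeg m').+1.
Proof.
have [|nz] := eqVneq (m i) 0%N; [by left | right].
have em : m = (m - U_(i) + U_(i))%MM.
  rewrite submK //; apply/mnm_lepP => j; rewrite mnm1E.
  by case: eqP => [<-|]; rewrite ?lt0n.
by exists (m - U_(i))%MM; rewrite {1}em // mdeg_addU.
Qed.

Lemma mnm_addUE n (m : 'X_{1..n}) (i j : 'I_n) : (m + U_(i))%MM j = (m j + (i == j))%N.
Proof. by rewrite mnmDE mnm1E. Qed.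

Definition iA : 'I_6 := @Ordinal 6 0 isT.
Definition iB : 'I_6 := @Ordinal 6 1 isT.
Definition iC : 'I_6 := @Ordinal 6 2 isT.
Definition ial : 'I_6 := @Ordinal 6 3 isT.
Definition ibe : 'I_6 := @Ordinal 6 4 isT.
Definition iga : 'I_6 := @Ordinal 6 5 isT.

Section PolynomialRepresentation.
Variables (F : fieldType) (p k1 k2 k3 k4 k5 k6 : F).
Local Notation V := {mpoly F[6]}.
Local Notation M := 'X_{1..6}.

(* The actions of B and C on monomials, forced by the three relations below.
   C on [x_B x^m] needs B on the polynomial [C x^m], of higher degree, so both
   are built together degree by degree: [rep_level d] is correct in degree < d. *)
Definition rep_step (d : nat) (bc : (M -> V) * (M -> V)) : (M -> V) * (M -> V) :=
  let b := bc.1 in let c := bc.2 in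
  let b' := fun m : M => if (mdeg m < d)%N then b m
     else if m iA == 0%N then 'X_[m + U_(iB)]
     else p *: ('X_iA * b (m - U_(iA))%MM) + k1 *: c (m - U_(iA))%MM
          + k2 *: ('X_iga * 'X_[m - U_(iA)]) in
  let c' := fun m : M => if (mdeg m < d)%N then c m
     else if m iA != 0%N then
       p^-1 *: ('X_iA * c (m - U_(iA))%MM) + k3 *: b (m - U_(iA))%MM
          + k4 *: ('X_ibe * 'X_[m - U_(iA)])
     else if m iB != 0%N then
       p *: linext b' (c (m - U_(iB))%MM) + k5 *: 'X_[m - U_(iB) + U_(iA)]
          + k6 *: ('X_ial * 'X_[m - U_(iB)])
     else 'X_[m + U_(iC)] in
  (b', c').

Fixpoint rep_level (d : nat) : (M -> V) * (M -> V) :=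
  if d is d'.+1 then rep_step d' (rep_level d') else (fun _ => 0, fun _ => 0).

Lemma rep_levelS d : rep_level d.+1 = rep_step d (rep_level d). Proof. by []. Qed.

Definition bmono (m : M) : V := (rep_level (mdeg m).+1).1 m.
Definition cmono (m : M) : V := (rep_level (mdeg m).+1).2 m.

Lemma rep_level_stable d (m : M) : (mdeg m <= d)%N ->
  (rep_level d.+1).1 m = bmono m /\ (rep_level d.+1).2 m = cmono m.
Proof.
elim: d => [|d IH]; first by rewrite leqn0 => /eqP dm0; rewrite /bmono /cmono dm0.
by rewrite leq_eqVlt => /orP [/eqP <- //|lt_md]; rewrite /= lt_md; apply: IH.
Qed.

Lemma bmono_noA (m : M) : m iA = 0%N -> bmono m = 'X_[m + U_(iB)].
Proof. by move=> mA; rewrite /bmono /= ltnn mA eqxx. Qed.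

Lemma bmono_addA (m : M) : bmono (m + U_(iA))%MM =
  p *: ('X_iA * bmono m) + k1 *: cmono m + k2 *: ('X_iga * 'X_[m]).
Proof.
rewrite /bmono /cmono mdeg_addU [in LHS]rep_levelS.
by cbv beta iota zeta delta [rep_step fst snd]; rewrite mdeg_addU ltnn mnm_addUE eqxx addn1 addmK.
Qed.

Lemma cmono_addA (m : M) : cmono (m + U_(iA))%MM =
  p^-1 *: ('X_iA * cmono m) + k3 *: bmono m + k4 *: ('X_ibe * 'X_[m]).
Proof.
rewrite /bmono /cmono mdeg_addU [in LHS]rep_levelS.
by cbv beta iota zeta delta [rep_step fst snd]; rewrite mdeg_addU ltnn mnm_addUE eqxx addn1 addmK.
Qed.

Lemma cmono_noAB (m : M) : m iA = 0%N -> m iB = 0%N -> cmono m = 'X_[m + U_(iC)].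
Proof. by move=> mA mB; rewrite /cmono /= ltnn mA mB eqxx. Qed.

Lemma cmono_addB_le (m : M) : m iA = 0%N -> (msize (cmono m) <= (mdeg m).+2)%N ->
  cmono (m + U_(iB))%MM = p *: linext bmono (cmono m) + k5 *: 'X_[m + U_(iA)]
                          + k6 *: ('X_ial * 'X_[m]).
Proof.
move=> mA size_c; rewrite {1}/cmono mdeg_addU rep_levelS.
cbv beta iota zeta delta [rep_step fst snd].
rewrite mdeg_addU ltnn !mnm_addUE mA /= addn1 /= addmK.
congr (_ *: _ + _ + _); apply: eq_linext => m' /msize_mdeg_lt lt_m'.
have le_m' : (mdeg m' <= (mdeg m).+1)%N by rewrite -ltnS; apply: leq_trans lt_m' size_c.
by case: (rep_level_stable le_m').
Qed.

Lemma msize_bcmono (m : M) :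
  (msize (bmono m) <= (mdeg m).+2)%N /\ (msize (cmono m) <= (mdeg m).+2)%N.
Proof.
have sizeZ (c : F) (v : V) k : (msize v <= k)%N -> (msize (c *: v) <= k)%N.
  by move=> sv; apply: leq_trans (msizeZ_le _ _) sv.
have sizeX (m' : M) (i : 'I_6) : (msize ('X_[m' + U_(i)] : V) <= (mdeg m').+2)%N.
  by rewrite msizeX mdeg_addU.
have sizeXX (c : F) (m' : M) (i : 'I_6) : (msize (c *: ('X_i * 'X_[m'])) <= (mdeg m').+2)%N.
  by apply: msize_scale_mulX; rewrite msizeX.
suff bound d (m' : M) : (mdeg m' <= d)%N ->
  (msize (bmono m') <= (mdeg m').+2)%N /\ (msize (cmono m') <= (mdeg m').+2)%N.
  exact: bound.
elim: d m' => [|d IH] {}m le_md.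
  move: le_md; rewrite leqn0 mdeg_eq0 => /eqP ->.
  by rewrite bmono_noA ?cmono_noAB ?mnm0E // !sizeX.
have size_b (m' : M) : (mdeg m' <= d.+1)%N -> (msize (bmono m') <= (mdeg m').+2)%N.
  move=> le_m'; have [m'A|[m'' em dm']] := mnm_splitU m' iA.
    by rewrite bmono_noA // sizeX.
  move: le_m'; rewrite dm' ltnS => /IH [sb sc]; rewrite em bmono_addA.
  apply: msize_add3_le; [exact: msize_scale_mulX | exact/sizeZ/ltnW |].
  by apply/msize_scale_mulX/ltnW; rewrite msizeX.
split; first exact: size_b.
have [mA|[m' em dm']] := mnm_splitU m iA; last first.
  move: le_md; rewrite dm' ltnS => /IH [sb sc]; rewrite em cmono_addA.
  apply: msize_add3_le; [exact: msize_scale_mulX | exact/sizeZ/ltnW |].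
  by apply/msize_scale_mulX/ltnW; rewrite msizeX.
have [mB|[m' em dm']] := mnm_splitU m iB; first by rewrite cmono_noAB // sizeX.
have m'A : m' iA = 0%N by move: mA; rewrite em mnm_addUE addn0.
move: le_md; rewrite dm' ltnS => /[dup] le_m' /IH [_ sc]; rewrite em cmono_addB_le //.
apply: msize_add3_le; [apply: sizeZ | exact/ltnW/sizeZ/sizeX | exact/ltnW/sizeXX].
apply: leq_trans (msize_linext (k := 1) _) _; last by rewrite addn1 ltnS.
move=> m'' /msize_mdeg_lt lt_m''; rewrite addn2; apply: size_b.
by rewrite -ltnS (leq_trans lt_m'') // (leq_trans sc) // !ltnS.
Qed.

Lemma cmono_addB (m : M) : m iA = 0%N ->
  cmono (m + U_(iB))%MM = p *: linext bmono (cmono m) + k5 *: 'X_[m + U_(iA)]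
                          + k6 *: ('X_ial * 'X_[m]).
Proof. by move=> mA; apply: cmono_addB_le => //; case: (msize_bcmono m). Qed.

Lemma bcmono_mulX (k : 'I_6) : (3 <= k)%N -> forall m : M,
  bmono (m + U_(k))%MM = 'X_k * bmono m /\ cmono (m + U_(k))%MM = 'X_k * cmono m.
Proof.
move=> k_ge3.
have kA : (k == iA) = false by apply/eqP => ek; move: k_ge3; rewrite ek.
have kB : (k == iB) = false by apply/eqP => ek; move: k_ge3; rewrite ek.
have addUkA (m : M) : (m + U_(k))%MM iA = m iA by rewrite mnm_addUE kA addn0.
have addUkB (m : M) : (m + U_(k))%MM iB = m iB by rewrite mnm_addUE kB addn0.
have addUC (m : M) j : (m + U_(j) + U_(k))%MM = (m + U_(k) + U_(j))%MM.
  by rewrite -!addmA [(U_(j) + _)%MM]addmC.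
have XaddUk (m : M) j : 'X_[m + U_(k) + U_(j)] = 'X_k * 'X_[m + U_(j)] :> V.
  by rewrite -addUC mpolyXD mulrC.
suff step d (m : M) : (mdeg m <= d)%N ->
  bmono (m + U_(k))%MM = 'X_k * bmono m /\ cmono (m + U_(k))%MM = 'X_k * cmono m.
  by move=> m; apply: step (leqnn _).
elim: d m => [|d IH] m le_md.
  move: le_md; rewrite leqn0 mdeg_eq0 => /eqP ->.
  by rewrite bmono_noA ?cmono_noAB ?bmono_noA ?cmono_noAB ?addUkA ?addUkB ?mnm0E // !XaddUk.
have mulX_b (m' : M) : (mdeg m' <= d.+1)%N -> bmono (m' + U_(k))%MM = 'X_k * bmono m'.
  move=> le_m'; have [m'A|[m'' em dm']] := mnm_splitU m' iA.
    by rewrite !bmono_noA ?addUkA // XaddUk.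
  move: le_m'; rewrite dm' ltnS => /IH [eb ec].
  rewrite em addUC !bmono_addA eb ec mpolyXD -!mul_mpolyC; ring.
split; first exact: mulX_b.
have [mA|[m' em dm']] := mnm_splitU m iA; last first.
  move: le_md; rewrite dm' ltnS => /IH [eb ec].
  rewrite em addUC !cmono_addA eb ec mpolyXD -!mul_mpolyC; ring.
have [mB|[m' em dm']] := mnm_splitU m iB.
  by rewrite !cmono_noAB ?addUkA ?addUkB // XaddUk.
have m'A : m' iA = 0%N by move: mA; rewrite em mnm_addUE addn0.
move: le_md; rewrite dm' ltnS => /[dup] le_m' /IH [_ ec].
rewrite em addUC !cmono_addB ?addUkA // ec XaddUk mpolyXD linext_mulX; last first.
  move=> m'' /msize_mdeg_lt lt_m''; apply: mulX_b.
  case: (msize_bcmono m') => _ sc.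
  by rewrite -ltnS (leq_trans lt_m'') // (leq_trans sc) // !ltnS.
rewrite !mpolyXD -!mul_mpolyC; ring.
Qed.

Definition actB (v : V) : V := linext bmono v.
Definition actC (v : V) : V := linext cmono v.

Lemma actBD : {morph actB : x y / x + y}. Proof. exact: linextD. Qed.
Lemma actCD : {morph actC : x y / x + y}. Proof. exact: linextD. Qed.
Lemma actBZ c x : actB (c *: x) = c *: actB x. Proof. exact: linextZ. Qed.
Lemma actCZ c x : actC (c *: x) = c *: actC x. Proof. exact: linextZ. Qed.
Lemma actB_X (m : M) : actB 'X_[m] = bmono m. Proof. exact: linextX. Qed.
Lemma actC_X (m : M) : actC 'X_[m] = cmono m. Proof. exact: linextX. Qed.

Lemma actB_mulX (k : 'I_6) x : (3 <= k)%N -> actB ('X_k * x) = 'X_k * actB x.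
Proof. by move=> k_ge3; apply: linext_mulX => m _; case: (bcmono_mulX k_ge3 m). Qed.
Lemma actC_mulX (k : 'I_6) x : (3 <= k)%N -> actC ('X_k * x) = 'X_k * actC x.
Proof. by move=> k_ge3; apply: linext_mulX => m _; case: (bcmono_mulX k_ge3 m). Qed.

Lemma XaddU (m : M) (i : 'I_6) : 'X_[m + U_(i)] = 'X_i * 'X_[m] :> V.
Proof. by rewrite mpolyXD mulrC. Qed.

Ltac act_linear := move=> *;
  rewrite ?mulrDr -?scalerAr ?(actBD, actCD, actBZ, actCZ) -?mul_mpolyC; ring.

Lemma actB_mulA x :
  actB ('X_iA * x) = p *: ('X_iA * actB x) + k1 *: actC x + k2 *: ('X_iga * x).
Proof.
move: x; apply: additive_eq_on_monomials => [||||m]; try by act_linear.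
by rewrite -XaddU actB_X bmono_addA actB_X actC_X.
Qed.

Lemma actC_mulA x :
  actC ('X_iA * x) = p^-1 *: ('X_iA * actC x) + k3 *: actB x + k4 *: ('X_ibe * x).
Proof.
move: x; apply: additive_eq_on_monomials => [||||m]; try by act_linear.
by rewrite -XaddU actC_X cmono_addA actB_X actC_X.
Qed.

Hypothesis p_neq0 : p != 0.

Lemma actC_actB x :
  actC (actB x) = p *: actB (actC x) + k5 *: ('X_iA * x) + k6 *: ('X_ial * x).
Proof.
move: x; apply: additive_eq_on_monomials => [||||m]; try by act_linear.
elim: {m}(m iA) {-2}m (erefl (m iA)) => [|n IH] m mA.
  by rewrite actB_X bmono_noA // actC_X cmono_addB // actC_X XaddU.
have [m0|[m' em _]] := mnm_splitU m iA; first by rewrite m0 in mA.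
have m'A : m' iA = n by move: mA; rewrite em mnm_addUE eqxx addn1 => -[].
rewrite em XaddU; set w := 'X_[m'].
have IHw : actC (actB w) = p *: actB (actC w) + k5 *: ('X_iA * w) + k6 *: ('X_ial * w).
  exact: IH.
have pVp : p%:MP * (p^-1)%:MP = 1 :> V by rewrite -mpolyCM mulfV ?mpolyC1.
rewrite actB_mulA !(actCD, actCZ) actC_mulA IHw actC_mulX // actC_mulA.
rewrite !(actBD, actBZ) actB_mulA actB_mulX // -!mul_mpolyC; ring: pVp.
Qed.

Lemma msize_actB x : (msize (actB x) <= (msize x).+1)%N.
Proof.
apply: leq_trans (msize_linext (k := 1) _) _; last by rewrite addn1.
by move=> m _; rewrite addn2; case: (msize_bcmono m).
Qed.

Lemma msize_actC x : (msize (actC x) <= (msize x).+1)%N.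
Proof.
apply: leq_trans (msize_linext (k := 1) _) _; last by rewrite addn1.
by move=> m _; rewrite addn2; case: (msize_bcmono m).
Qed.

End PolynomialRepresentation.

Section Endomorphisms.
Variable F : fieldType.
Local Notation V := {mpoly F[6]}.

(* Linear maps commuting with the multiplications by x_alpha, x_beta, x_gamma
   (indices 3, 4, 5), so that these multiplications are central in [endo]. *)
Record endo := Endo {
  endo_fun :> V -> V;
  endoD : forall x y, endo_fun (x + y) = endo_fun x + endo_fun y;
  endoZ : forall c x, endo_fun (c *: x) = c *: endo_fun x;
  endo_mulX : forall k : 'I_6, (3 <= k)%N -> forall x, endo_fun ('X_k * x) = 'X_k * endo_fun x }.

HB.instance Definition _ := boolp.gen_eqMixin endo.
HB.instance Definition _ := boolp.gen_choiceMixin endo.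

Lemma endo_ext (f g : endo) : f =1 g -> f = g.
Proof.
case: f g => f fD fZ fX [g gD gZ gX] /= /boolp.funext eq_fg.
by subst g; congr Endo; apply: boolp.Prop_irrelevance.
Qed.

Program Definition endo_zero : endo := @Endo (fun _ => 0) _ _ _.
Next Obligation. by rewrite addr0. Qed.
Next Obligation. by rewrite scaler0. Qed.
Next Obligation. by rewrite mulr0. Qed.

Program Definition endo_add (f g : endo) : endo := @Endo (fun x => f x + g x) _ _ _.
Next Obligation. by rewrite !endoD addrACA. Qed.
Next Obligation. by rewrite !endoZ scalerDr. Qed.
Next Obligation. by rewrite !endo_mulX // mulrDr. Qed.

Program Definition endo_opp (f : endo) : endo := @Endo (fun x => - f x) _ _ _.
Next Obligation. by rewrite endoD opprD. Qed.
Next Obligation. by rewrite endoZ scalerN. Qed.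
Next Obligation. by rewrite endo_mulX // mulrN. Qed.

Program Definition endo_comp (f g : endo) : endo := @Endo (fun x => f (g x)) _ _ _.
Next Obligation. by rewrite !endoD. Qed.
Next Obligation. by rewrite !endoZ. Qed.
Next Obligation. by rewrite !endo_mulX. Qed.

Program Definition endo_id : endo := @Endo id _ _ _.

Program Definition endo_scale (c : F) (f : endo) : endo := @Endo (fun x => c *: f x) _ _ _.
Next Obligation. by rewrite endoD scalerDr. Qed.
Next Obligation. by rewrite endoZ !scalerA mulrC. Qed.
Next Obligation. by rewrite endo_mulX // scalerAr. Qed.

Fact endo_addA : associative endo_add.
Proof. by move=> f g h; apply: endo_ext => x /=; rewrite addrA. Qed.
Fact endo_addC : commutative endo_add.
Proof. by move=> f g; apply: endo_ext => x /=; rewrite addrC. Qed.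
Fact endo_add0 : left_id endo_zero endo_add.
Proof. by move=> f; apply: endo_ext => x /=; rewrite add0r. Qed.
Fact endo_addN : left_inverse endo_zero endo_opp endo_add.
Proof. by move=> f; apply: endo_ext => x /=; rewrite addNr. Qed.

HB.instance Definition _ :=
  GRing.isZmodule.Build endo endo_addA endo_addC endo_add0 endo_addN.

Fact endo_compA : associative endo_comp. Proof. by move=> *; apply: endo_ext. Qed.
Fact endo_id_comp : left_id endo_id endo_comp. Proof. by move=> *; apply: endo_ext. Qed.
Fact endo_comp_id : right_id endo_id endo_comp. Proof. by move=> *; apply: endo_ext. Qed.
Fact endo_compDl : left_distributive endo_comp +%R. Proof. by move=> *; apply: endo_ext. Qed.
Fact endo_compDr : right_distributive endo_comp +%R.
Proof. by move=> f g h; apply: endo_ext => x /=; rewrite endoD. Qed.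
Fact endo_id_neq0 : endo_id != 0.
Proof. by apply/eqP => /(congr1 (fun f : endo => f 1)) /= /eqP; rewrite oner_eq0. Qed.

HB.instance Definition _ := GRing.Zmodule_isNzRing.Build endo
  endo_compA endo_id_comp endo_comp_id endo_compDl endo_compDr endo_id_neq0.

Fact endo_scaleA a b (f : endo) : endo_scale a (endo_scale b f) = endo_scale (a * b) f.
Proof. by apply: endo_ext => x /=; rewrite scalerA. Qed.
Fact endo_scale1 : left_id 1 endo_scale.
Proof. by move=> f; apply: endo_ext => x /=; rewrite scale1r. Qed.
Fact endo_scaleDr : right_distributive endo_scale +%R.
Proof. by move=> a f g; apply: endo_ext => x /=; rewrite scalerDr. Qed.
Fact endo_scaleDl (f : endo) : {morph endo_scale^~ f : a b / a + b}.
Proof. by move=> a b; apply: endo_ext => x /=; rewrite scalerDl. Qed.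

HB.instance Definition _ := GRing.Zmodule_isLmodule.Build F endo
  endo_scaleA endo_scale1 endo_scaleDr endo_scaleDl.

Fact endo_scaleAl (a : F) (f g : endo) : a *: (f * g) = (a *: f) * g.
Proof. by apply: endo_ext. Qed.
HB.instance Definition _ := GRing.Lmodule_isLalgebra.Build F endo endo_scaleAl.

Fact endo_scaleAr (a : F) (f g : endo) : a *: (f * g) = f * (a *: g).
Proof. by apply: endo_ext => x /=; rewrite endoZ. Qed.
HB.instance Definition _ := GRing.Lalgebra_isAlgebra.Build F endo endo_scaleAr.

Lemma endo_mulE (f g : endo) x : (f * g) x = f (g x). Proof. by []. Qed.
Lemma endo_addE (f g : endo) x : (f + g) x = f x + g x. Proof. by []. Qed.
Lemma endo_oppE (f : endo) x : (- f) x = - f x. Proof. by []. Qed.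
Lemma endo_scaleE c (f : endo) x : (c *: f) x = c *: f x. Proof. by []. Qed.

End Endomorphisms.

(** * Relations and the Casimir element *)

Section CentralElements.
Variables (F : fieldType) (D : algType F).

Lemma central1 : central (1 : D).
Proof. by move=> y; rewrite mulr1 mul1r. Qed.

Lemma centralD (x y : D) : central x -> central y -> central (x + y).
Proof. by move=> cx cy z; rewrite mulrDl mulrDr cx cy. Qed.

Lemma centralM (x y : D) : central x -> central y -> central (x * y).
Proof. by move=> cx cy z; rewrite -mulrA cy mulrA cx mulrA. Qed.

Lemma centralZ c (x : D) : central x -> central (c *: x).
Proof. by move=> cx z; rewrite -scalerAl cx scalerAr. Qed.

Lemma central_subalg (gens : seq D) x :
  (forall g, g \in gens -> central g) -> in_subalg gens x -> central x.
Proof.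
move=> cgens; elim=> [g /cgens //||||c u _ cu]; last exact: centralZ.
- exact: central1.
- by move=> u v _ cu _ cv; apply: centralD.
- by move=> u v _ cu _ cv; apply: centralM.
Qed.

Lemma central_of_gens (gens : seq D) x : (forall y, in_subalg gens y) ->
  (forall g, g \in gens -> x * g = g * x) -> central x.
Proof.
move=> gen_all xgens y; elim: (gen_all y) => [g /xgens //||||c u _ xu].
- by rewrite mulr1 mul1r.
- by move=> u v _ xu _ xv; rewrite mulrDr mulrDl xu xv.
- by move=> u v _ xu _ xv; rewrite mulrA xu -mulrA xv mulrA.
- by rewrite -scalerAr xu scalerAl.
Qed.

Lemma in_subalg0 (gens : seq D) : in_subalg gens 0.
Proof. by rewrite -(scale0r 1); apply/sa_scale/sa_one. Qed.

Lemma in_subalgX (gens : seq D) x k : in_subalg gens x -> in_subalg gens (x ^+ k).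
Proof. by move=> gx; elim: k => [|k IH]; [apply: sa_one | rewrite exprS; apply: sa_mul]. Qed.

End CentralElements.

Section NonzeroScalars.
Variables (F : fieldType) (q : F).
Hypotheses (q_neq0 : q != 0) (q4_neq1 : q ^+ 4 != 1).

Lemma q2_subVq2_neq0 : q ^+ 2 - q ^- 2 != 0.
Proof.
apply: contra q4_neq1; rewrite subr_eq0 => /eqP e; apply/eqP.
by rewrite (_ : 4 = 2 + 2)%N // exprD {1}e mulVf // expf_neq0.
Qed.

Lemma qq2_add1_neq0 : q * q + 1 != 0.
Proof.
apply: contra q4_neq1 => /eqP e; apply/eqP.
have q2 : q ^+ 2 = -1 by rewrite expr2; apply/eqP; rewrite -addr_eq0 e.
by rewrite (_ : 4 = 2 * 2)%N // exprM q2 sqrrN expr1n.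
Qed.

Lemma q_addV_neq0 : q + q^-1 != 0.
Proof.
apply: contra qq2_add1_neq0 => /eqP e; apply/eqP.
by rewrite -(mulfV q_neq0) -mulrDr e mulr0.
Qed.

Lemma qq2_sub1_neq0 : (q * q) ^+ 2 - 1 != 0.
Proof. by rewrite -expr2 -exprM subr_eq0. Qed.

End NonzeroScalars.

(* Closes the scalar goals left by [lin_coef], using the nonzero scalars above
   for the parameter [q] found in the context. *)
Ltac aw_field :=
  repeat split; field;
  match goal with hq : is_true (?q != 0), hq4 : is_true (?q ^+ 4 != 1) |- _ =>
    by rewrite ?hq ?(q2_subVq2_neq0 hq hq4) ?(q_addV_neq0 hq hq4)
               ?(qq2_add1_neq0 hq4) ?(qq2_sub1_neq0 hq4)
  end.

Ltac expand_products :=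
  rewrite ?mulrDr ?mulrDl ?mulrBr ?mulrBl ?mulrN ?mulNr -?scalerAr -?scalerAl ?mulrA.

Section AskeyWilsonRelations.
Variables (F : fieldType) (q : F) (D : algType F) (A B C : D).

Section Centrality.
Hypothesis rels : AW_rels q A B C.

Lemma aw_alpha_central : central (aw_alpha q A B C).
Proof. by case: rels => *; apply: centralZ. Qed.
Lemma aw_beta_central : central (aw_beta q A B C).
Proof. by case: rels => *; apply: centralZ. Qed.
Lemma aw_gamma_central : central (aw_gamma q A B C).
Proof. by case: rels => *; apply: centralZ. Qed.

End Centrality.

Hypotheses (q_neq0 : q != 0) (q4_neq1 : q ^+ 4 != 1).
Local Notation t := (q ^+ 2 - q ^- 2).
Local Notation qq := (q + q^-1).

Lemma aw_BA :
  B * A = q ^+ 2 *: (A * B) + (q * t) *: C - (q * t / qq) *: aw_gamma q A B C.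
Proof. by rewrite /aw_gamma /aw_cC; lin_coef F; aw_field. Qed.

Lemma aw_CA :
  C * A = q ^- 2 *: (A * C) - (q^-1 * t) *: B + (q^-1 * t / qq) *: aw_beta q A B C.
Proof. by rewrite /aw_beta /aw_cB; lin_coef F; aw_field. Qed.

Lemma aw_CB :
  C * B = q ^+ 2 *: (B * C) + (q * t) *: A - (q * t / qq) *: aw_alpha q A B C.
Proof. by rewrite /aw_alpha /aw_cA; lin_coef F; aw_field. Qed.

End AskeyWilsonRelations.

Definition casimir (F : fieldType) (q : F) (D : algType F) (A B C al be ga : D) : D :=
  q *: (A * B * C) + q ^+ 2 *: (A * A) + q ^- 2 *: (B * B) + q ^+ 2 *: (C * C)
  - q *: (A * al) - q^-1 *: (B * be) - q *: (C * ga).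

Section Casimir.
Variables (F : fieldType) (q : F) (D : algType F) (A B C al be ga : D).
Hypotheses (q_neq0 : q != 0) (q4_neq1 : q ^+ 4 != 1).
Hypotheses (cal : central al) (cbe : central be) (cga : central ga).
Local Notation t := (q ^+ 2 - q ^- 2).
Local Notation qq := (q + q^-1).
Hypothesis BA : B * A = q ^+ 2 *: (A * B) + (q * t) *: C - (q * t / qq) *: ga.
Hypothesis CA : C * A = q ^- 2 *: (A * C) - (q^-1 * t) *: B + (q^-1 * t / qq) *: be.
Hypothesis CB : C * B = q ^+ 2 *: (B * C) + (q * t) *: A - (q * t / qq) *: al.

Lemma AB_rel : A * B = q ^- 2 *: (B * A) - (q^-1 * t) *: C + (q^-1 * t / qq) *: ga.
Proof. by rewrite BA; lin_coef F; aw_field. Qed.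

Lemma AC_rel : A * C = q ^+ 2 *: (C * A) + (q * t) *: B - (q * t / qq) *: be.
Proof. by rewrite CA; lin_coef F; aw_field. Qed.

Lemma BC_rel : B * C = q ^- 2 *: (C * B) - (q^-1 * t) *: A + (q^-1 * t / qq) *: al.
Proof. by rewrite CB; lin_coef F; aw_field. Qed.

Lemma BCA_rel : B * C * A = A * B * C + (q^-1 * t) *: (C * C)
  - (q^-2 * (q * t / qq)) *: (C * ga) - (q^-1 * t) *: (B * B) + (q^-1 * t / qq) *: (B * be).
Proof.
rewrite -mulrA CA; expand_products; rewrite BA; expand_products; rewrite (cga C).
by lin_coef F; aw_field.
Qed.

Lemma BBA_rel : B * B * A = q ^+ 4 *: (A * B * B) + (q ^+ 5 * t + q * t) *: (B * C)
  + (q ^+ 4 * t ^+ 2) *: A - (q ^+ 3 * t * (q * t / qq)) *: al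
  - ((q ^+ 2 + 1) * (q * t / qq)) *: (B * ga).
Proof.
rewrite -mulrA BA; expand_products; rewrite BA; expand_products; rewrite CB; expand_products.
by rewrite (cga B); lin_coef F; aw_field.
Qed.

Lemma CCA_rel : C * C * A = q ^- 4 *: (A * C * C) - (q ^- 3 * t + q * t) *: (B * C)
  + ((q ^- 2 + 1) * (q^-1 * t / qq)) *: (C * be) - (t ^+ 2) *: A
  + (q^-1 * t * (q * t / qq)) *: al.
Proof.
rewrite -mulrA CA; expand_products; rewrite CA; expand_products; rewrite CB; expand_products.
by rewrite (cbe C); lin_coef F; aw_field.
Qed.

Lemma casimir_commA : A * casimir q A B C al be ga = casimir q A B C al be ga * A.
Proof.
rewrite /casimir; expand_products.
have e1 : A * B * C * A = A * (B * C * A) by rewrite !mulrA.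
have e2 : A * al * A = A * A * al by rewrite -mulrA (cal A) mulrA.
have e3 : B * be * A = B * A * be by rewrite -mulrA (cbe A) mulrA.
have e4 : C * ga * A = C * A * ga by rewrite -mulrA (cga A) mulrA.
rewrite e1 e2 e3 e4 BCA_rel BBA_rel CCA_rel BA CA; expand_products; rewrite (cga be).
by lin_coef F; aw_field.
Qed.

Lemma casimir_rotate : casimir q A B C al be ga = casimir q B C A be ga al.
Proof. by rewrite /casimir BCA_rel; lin_coef F; aw_field. Qed.

End Casimir.

Lemma casimir_central (F : fieldType) (q : F) (D : algType F) (A B C al be ga : D) :
  q != 0 -> q ^+ 4 != 1 -> central al -> central be -> central ga ->
  B * A = q ^+ 2 *: (A * B) + (q * (q ^+ 2 - q ^- 2)) *: C
          - (q * (q ^+ 2 - q ^- 2) / (q + q^-1)) *: ga ->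
  C * A = q ^- 2 *: (A * C) - (q^-1 * (q ^+ 2 - q ^- 2)) *: B
          + (q^-1 * (q ^+ 2 - q ^- 2) / (q + q^-1)) *: be ->
  C * B = q ^+ 2 *: (B * C) + (q * (q ^+ 2 - q ^- 2)) *: A
          - (q * (q ^+ 2 - q ^- 2) / (q + q^-1)) *: al ->
  (forall x : D, in_subalg [:: A; B; C] x) ->
  central (casimir q A B C al be ga).
Proof.
move=> q_neq0 q4_neq1 cal cbe cga BA CA CB gen_all.
have AB := AB_rel q_neq0 q4_neq1 BA; have AC := AC_rel q_neq0 q4_neq1 CA.
have BC := BC_rel q_neq0 q4_neq1 CB.
apply: (central_of_gens gen_all) => g; rewrite !inE => /or3P [] /eqP ->.
- by rewrite casimir_commA.
- by rewrite casimir_rotate // casimir_commA.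
- by rewrite casimir_rotate // casimir_rotate // casimir_commA.
Qed.

(** * Ordered words and the degree filtration *)

Definition ord_le : rel 'I_6 := fun x y => (x <= y)%N.

Lemma ord_le_trans : transitive ord_le. Proof. by move=> y x z; apply: leq_trans. Qed.
Lemma ord_le_total : total ord_le. Proof. by move=> x y; apply: leq_total. Qed.
Lemma ord_le_anti : antisymmetric ord_le.
Proof. by move=> x y; rewrite /ord_le -eqn_leq => /eqP; apply: val_inj. Qed.

Fixpoint ins (x : 'I_6) (s : seq 'I_6) : seq 'I_6 :=
  if s is y :: s' then (if ord_le x y then x :: s else y :: ins x s') else [:: x].

Definition letters (w : seq 'I_6) : 'X_{1..6} := [multinom count_mem i w | i < 6].

Definition sorted_word (m : 'X_{1..6}) : seq 'I_6 :=
  sort ord_le (nseq (m iA) iA ++ nseq (m iB) iB ++ nseq (m iC) iC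
               ++ nseq (m ial) ial ++ nseq (m ibe) ibe ++ nseq (m iga) iga).

Lemma ord6P (P : 'I_6 -> Prop) :
  P iA -> P iB -> P iC -> P ial -> P ibe -> P iga -> forall i, P i.
Proof.
move=> PA PB PC Pal Pbe Pga.
by case=> [[|[|[|[|[|[|//]]]]]] i6]; rewrite (bool_irrelevance i6 isT).
Qed.

Lemma prod6 (R : comNzRingType) (f : 'I_6 -> R) :
  \prod_(i < 6) f i = f iA * f iB * f iC * f ial * f ibe * f iga.
Proof.
rewrite !big_ord_recl big_ord0 mulr1 !mulrA.
by congr (_ * _ * _ * _ * _ * _); congr f; apply: val_inj.
Qed.

Lemma count_ins x s i : count_mem i (ins x s) = ((x == i) + count_mem i s)%N.
Proof. by elim: s => [|y s IH] /=; [rewrite addn0 | case: ifP => _ //=; rewrite IH addnCA]. Qed.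

Lemma sorted_ins x s : sorted ord_le s -> sorted ord_le (ins x s).
Proof.
have path_ins z s' : ord_le z x -> path ord_le z s' -> path ord_le z (ins x s').
  elim: s' z => [|y s' IH] z le_zx /=; first by rewrite le_zx.
  case/andP => le_zy path_y; case: ifP => le_xy /=; first by rewrite le_zx le_xy path_y.
  by rewrite le_zy IH //; case/orP: (ord_le_total x y) => //; rewrite le_xy.
case: s => [//|y s] /= path_y; case: ifP => le_xy /=; first by rewrite le_xy path_y.
by apply: path_ins => //; case/orP: (ord_le_total x y) => //; rewrite le_xy.
Qed.

Lemma count_sorted_word m i : count_mem i (sorted_word m) = m i.
Proof.
rewrite /sorted_word (permP (permEl (perm_sort _ _))) !count_cat !count_nseq.
by elim/ord6P: i; rewrite /= ?mul0n ?mul1n ?addn0 ?add0n.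
Qed.

Lemma letters_sorted_word m : letters (sorted_word m) = m.
Proof. by apply/mnmP => i; rewrite mnmE count_sorted_word. Qed.

Lemma sorted_word_sorted m : sorted ord_le (sorted_word m).
Proof. exact/sort_sorted/ord_le_total. Qed.

Lemma ins_sorted_word x m : ins x (sorted_word m) = sorted_word (m + U_(x))%MM.
Proof.
apply: (sorted_eq ord_le_trans ord_le_anti); rewrite ?sorted_ins ?sorted_word_sorted //.
by apply/allP => i _; apply/eqP; rewrite count_ins !count_sorted_word mnm_addUE addnC.
Qed.

Lemma size_count (s : seq 'I_6) : size s = (\sum_(i < 6) count_mem i s)%N.
Proof.
elim: s => [|x s IH] /=; first by rewrite big1.
rewrite IH big_split /= -add1n; congr (_ + _)%N.
by rewrite (bigD1 x) //= eqxx big1 // => i /negbTE; rewrite eq_sym => ->.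
Qed.

Lemma size_sorted_word m : size (sorted_word m) = mdeg m.
Proof. by rewrite size_count mdegE; apply: eq_bigr => i _; rewrite count_sorted_word. Qed.

Lemma mdeg_letters w : mdeg (letters w) = size w.
Proof. by rewrite mdegE size_count; apply: eq_bigr => i _; rewrite mnmE. Qed.

Lemma letters_nil : letters [::] = 0%MM.
Proof. by apply/mnmP => i; rewrite !mnmE. Qed.

Lemma letters_cons x w : letters (x :: w) = (letters w + U_(x))%MM.
Proof. by apply/mnmP => i; rewrite mnm_addUE !mnmE /= addnC. Qed.

Lemma sorted_word0 : sorted_word 0%MM = [::].
Proof. by apply/eqP; rewrite -size_eq0 size_sorted_word mdeg0. Qed.

Lemma size_flatten_nseq (T : Type) k (s : seq T) : size (flatten (nseq k s)) = (k * size s)%N.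
Proof. by elim: k => //= k IH; rewrite size_cat IH mulSn. Qed.

Lemma letters_balanced_word (m : 'X_{1..6}) : m iA = m iB -> m iB = m iC ->
  letters (flatten (nseq (m iA) [:: iA; iB; iC])
       ++ nseq (m ial) ial ++ nseq (m ibe) ibe ++ nseq (m iga) iga) = m.
Proof.
move=> eAB eBC; apply/mnmP => i; rewrite mnmE !count_cat count_flatten.
rewrite (_ : map _ _ = nseq (m iA) (count_mem i [:: iA; iB; iC])); last first.
  by elim: (m iA) => //= k ->.
rewrite !count_nseq; have sumn_nseq k c : sumn (nseq k c) = (c * k)%N.
  by elim: k => [|k /= ->]; rewrite ?muln0 // mulnS.
by rewrite sumn_nseq; elim/ord6P: i; rewrite /= ?mul0n ?mul1n ?addn0 ?add0n -?eAB -?eBC.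
Qed.

Lemma prod_count (R : comNzRingType) (f : 'I_6 -> R) (s : seq 'I_6) :
  \prod_(y <- s) f y = \prod_(i < 6) f i ^+ count_mem i s.
Proof.
elim: s => [|x s IH]; first by rewrite big_nil big1.
rewrite big_cons IH /= [RHS](eq_bigr (fun i => f i ^+ (x == i) * f i ^+ count_mem i s)).
  rewrite big_split /=; congr (_ * _).
  rewrite (bigD1 x) //= eqxx expr1 big1 ?mulr1 // => i /negbTE.
  by rewrite eq_sym => ->; rewrite expr0.
by move=> i _; rewrite -exprD.
Qed.

Section Words.
Variables (F : fieldType) (D : algType F) (A B C al be ga : D).

Definition gen (i : 'I_6) : D := [:: A; B; C; al; be; ga]`_i.
Definition wordval (w : seq 'I_6) : D := \prod_(i <- w) gen i.
Definition mono (m : 'X_{1..6}) : D := wordval (sorted_word m).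

Lemma wordval_nil : wordval [::] = 1. Proof. by rewrite /wordval big_nil. Qed.
Lemma wordval_cons x w : wordval (x :: w) = gen x * wordval w.
Proof. by rewrite /wordval big_cons. Qed.
Lemma wordval_cat w1 w2 : wordval (w1 ++ w2) = wordval w1 * wordval w2.
Proof. by rewrite /wordval big_cat. Qed.
Lemma wordval_nseq k x : wordval (nseq k x) = gen x ^+ k.
Proof. by elim: k => [|k IH]; rewrite ?wordval_nil // wordval_cons IH exprS. Qed.

Lemma mono0 : mono 0%MM = 1. Proof. by rewrite /mono sorted_word0 wordval_nil. Qed.

Inductive span_le (d : nat) : D -> Prop :=
  | span_word w : (size w <= d)%N -> span_le d (wordval w)
  | span_add x y : span_le d x -> span_le d y -> span_le d (x + y)
  | span_scale (c : F) x : span_le d x -> span_le d (c *: x).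

Lemma span_le0 d : span_le d 0.
Proof. by rewrite -(scale0r (wordval [::])); apply/span_scale/span_word. Qed.

Lemma span_leN d x : span_le d x -> span_le d (- x).
Proof. by move=> sx; rewrite -scaleN1r; apply: span_scale. Qed.

Lemma span_leB d x y : span_le d x -> span_le d y -> span_le d (x - y).
Proof. by move=> sx sy; apply/span_add/span_leN. Qed.

Lemma span_le_sum d I (r : seq I) (P : pred I) (f : I -> D) :
  (forall i, P i -> span_le d (f i)) -> span_le d (\sum_(i <- r | P i) f i).
Proof.
move=> sf; elim: r => [|a r IH]; first by rewrite big_nil; apply: span_le0.
by rewrite big_cons; case: ifP => // Pa; apply/span_add/IH/sf.
Qed.

Lemma span_le_mono d d' x : (d <= d')%N -> span_le d x -> span_le d' x.
Proof.
move=> le_d; elim=> [w le_w|x1 y1 _ s1 _ s2|c x1 _ s1].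
- exact/span_word/(leq_trans le_w le_d).
- exact: span_add.
- exact: span_scale.
Qed.

Lemma span_le1 d : span_le d 1.
Proof. by rewrite -wordval_nil; apply: span_word. Qed.

Lemma span_le_gen x : span_le 1 (gen x).
Proof. by rewrite -[gen x]mulr1 -wordval_nil -wordval_cons; apply: span_word. Qed.

Lemma span_le_letter g : g \in [:: A; B; C; al; be; ga] -> span_le 1 g.
Proof.
rewrite !inE => /or4P [|||/or3P []] /eqP ->;
  [ exact: (span_le_gen iA) | exact: (span_le_gen iB) | exact: (span_le_gen iC)
  | exact: (span_le_gen ial) | exact: (span_le_gen ibe) | exact: (span_le_gen iga)].
Qed.

Lemma span_leM a b x y : span_le a x -> span_le b y -> span_le (a + b) (x * y).
Proof.
move=> sx; elim: sx y => [w le_w|x1 y1 _ IH1 _ IH2|c x1 _ IH] y sy.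
- elim: sy => [w' le_w'|x2 y2 _ s2 _ s3|c x2 _ s2].
  + by rewrite -wordval_cat; apply: span_word; rewrite size_cat leq_add.
  + by rewrite mulrDr; apply: span_add.
  + by rewrite -scalerAr; apply: span_scale.
- by rewrite mulrDl; apply: span_add; [apply: IH1 | apply: IH2].
- by rewrite -scalerAl; apply/span_scale/IH.
Qed.

Lemma span_le_genM n x y : span_le n y -> span_le n.+1 (gen x * y).
Proof. exact/(span_leM (a := 1))/span_le_gen. Qed.

Lemma span_le_Mgen n x y : span_le n x -> span_le n.+1 (x * gen y).
Proof. by move=> sx; rewrite -addn1; apply/span_leM/span_le_gen. Qed.

End Words.

(* [gen x * gen y = qcomm q x y *: (gen y * gen x)] modulo lower degree. *)
Definition qcomm (F : fieldType) (q : F) (x y : 'I_6) : F :=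
  match nat_of_ord x, nat_of_ord y with
  | 1%N, 0%N | 0%N, 2%N | 2%N, 1%N => q ^+ 2
  | 0%N, 1%N | 2%N, 0%N | 1%N, 2%N => q ^- 2
  | _, _ => 1
  end.

Lemma qcomm_neq0 (F : fieldType) (q : F) x y : q != 0 -> qcomm q x y != 0.
Proof.
move=> q_neq0; rewrite /qcomm.
by case: x => [[|[|[|[|[|[|//]]]]]] ?]; case: y => [[|[|[|[|[|[|//]]]]]] ?];
  rewrite ?oner_eq0 ?expf_neq0 ?invr_eq0 ?expf_neq0.
Qed.

Lemma expf_inj_nonroot (F : fieldType) (q : F) : q != 0 ->
  (forall n, (0 < n)%N -> q ^+ n != 1) -> injective (fun n => q ^+ n).
Proof.
move=> q_neq0 q_nonroot.
suff le_inj a b : (a <= b)%N -> q ^+ a = q ^+ b -> a = b.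
  by move=> a b /=; case: (leqP a b) => [/le_inj|/ltnW /le_inj le_ba /esym /le_ba].
move=> le_ab qab; apply/eqP; rewrite eqn_leq le_ab /= leqNgt; apply/negP => lt_ab.
have : q ^+ (b - a) == 1.
  by rewrite -(inj_eq (mulfI (expf_neq0 a q_neq0))) -exprD subnKC // mulr1 qab.
by apply/negP/q_nonroot; rewrite subn_gt0.
Qed.

(** * The center *)

Section CenterOfPresentation.
Variables (F : fieldType) (q : F) (D : algType F) (A B C al be ga : D).
Hypotheses (q_neq0 : q != 0) (q4_neq1 : q ^+ 4 != 1).
Hypothesis q_nonroot : forall n, (0 < n)%N -> q ^+ n != 1.
Hypotheses (cal : central al) (cbe : central be) (cga : central ga).
Local Notation t := (q ^+ 2 - q ^- 2).
Local Notation qq := (q + q^-1).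
Hypothesis BA : B * A = q ^+ 2 *: (A * B) + (q * t) *: C - (q * t / qq) *: ga.
Hypothesis CA : C * A = q ^- 2 *: (A * C) - (q^-1 * t) *: B + (q^-1 * t / qq) *: be.
Hypothesis CB : C * B = q ^+ 2 *: (B * C) + (q * t) *: A - (q * t / qq) *: al.
Hypothesis gen_all : forall x : D, in_subalg [:: A; B; C] x.

Local Notation gen := (gen A B C al be ga).
Local Notation wordval := (wordval A B C al be ga).
Local Notation mono := (mono A B C al be ga).
Local Notation span_le := (span_le A B C al be ga).
Local Notation Omega := (casimir q A B C al be ga).
Local Notation Z := [:: Omega; al; be; ga].

Lemma gen_commute x y : span_le 1 (gen x * gen y - qcomm q x y *: (gen y * gen x)).
Proof.
have commuting (u v : D) : u * v = v * u -> span_le 1 (u * v - 1 *: (v * u)).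
  by move=> ->; rewrite scale1r subrr; apply: span_le0.
have lin2 (a b : F) i j : span_le 1 (a *: gen i + b *: gen j).
  by apply: span_add; apply/span_scale/span_le_gen.
case: x => [[|[|[|[|[|[|//]]]]]] hx]; case: y => [[|[|[|[|[|[|//]]]]]] hy];
  rewrite /qcomm /=;
  try (apply: commuting; first [by [] | by rewrite cal | by rewrite cbe | by rewrite cga]).
- have -> : A * B - q ^- 2 *: (B * A) =
    (- (q ^- 2 * (q * t))) *: C + (q ^- 2 * (q * t / qq)) *: ga.
    by rewrite BA; lin_coef F; aw_field.
  exact: (lin2 _ _ iC iga).
- have -> : A * C - q ^+ 2 *: (C * A) = (q * t) *: B + (- (q ^+ 2 * (q^-1 * t / qq))) *: be.
    by rewrite CA; lin_coef F; aw_field.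
  exact: (lin2 _ _ iB ibe).
- have -> : B * A - q ^+ 2 *: (A * B) = (q * t) *: C + (- (q * t / qq)) *: ga.
    by rewrite BA; lin_coef F; aw_field.
  exact: (lin2 _ _ iC iga).
- have -> : B * C - q ^- 2 *: (C * B) =
    (- (q ^- 2 * (q * t))) *: A + (q ^- 2 * (q * t / qq)) *: al.
    by rewrite CB; lin_coef F; aw_field.
  exact: (lin2 _ _ iA ial).
- have -> : C * A - q ^- 2 *: (A * C) = (- (q^-1 * t)) *: B + (q^-1 * t / qq) *: be.
    by rewrite CA; lin_coef F; aw_field.
  exact: (lin2 _ _ iB ibe).
- have -> : C * B - q ^+ 2 *: (B * C) = (q * t) *: A + (- (q * t / qq)) *: al.
    by rewrite CB; lin_coef F; aw_field.
  exact: (lin2 _ _ iA ial).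
Qed.

Lemma word_commute w y : span_le (size w)
  (wordval w * gen y - (\prod_(x <- w) qcomm q x y) *: (gen y * wordval w)).
Proof.
elim: w => [|x w IH].
  by rewrite big_nil wordval_nil mulr1 mul1r scale1r subrr; apply: span_le0.
rewrite wordval_cons big_cons; set c := \prod_(j <- w) qcomm q j y.
have -> : gen x * wordval w * gen y - (qcomm q x y * c) *: (gen y * (gen x * wordval w)) =
    gen x * (wordval w * gen y - c *: (gen y * wordval w))
    + c *: ((gen x * gen y - qcomm q x y *: (gen y * gen x)) * wordval w).
  by expand_products; lin_coef F; repeat split; ring.
apply: span_add; first exact: span_le_genM.
by apply/span_scale/(span_leM (a := 1)); [apply: gen_commute | apply: span_word].
Qed.

Fixpoint ins_factor (x : 'I_6) (s : seq 'I_6) : F :=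
  if s is y :: s' then (if ord_le x y then 1 else qcomm q x y * ins_factor x s') else 1.

Lemma ins_factor_neq0 x s : ins_factor x s != 0.
Proof.
elim: s => [|y s IH] /=; first exact: oner_neq0.
by case: ifP => _; rewrite ?oner_neq0 // mulf_neq0 // qcomm_neq0.
Qed.

Lemma ins_straighten x s :
  span_le (size s) (gen x * wordval s - ins_factor x s *: wordval (ins x s)).
Proof.
elim: s => [|y s IH] /=.
  by rewrite wordval_cons scale1r subrr; apply: span_le0.
case: ifP => _.
  by rewrite scale1r [wordval (x :: _)]wordval_cons subrr; apply: span_le0.
rewrite !wordval_cons.
have -> : gen x * (gen y * wordval s) - (qcomm q x y * ins_factor x s) *:
      (gen y * wordval (ins x s)) =
    (gen x * gen y - qcomm q x y *: (gen y * gen x)) * wordval s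
    + qcomm q x y *: (gen y * (gen x * wordval s - ins_factor x s *: wordval (ins x s))).
  by expand_products; lin_coef F; repeat split; ring.
apply: span_add; last exact/span_scale/span_le_genM.
by apply: (span_leM (a := 1)); [apply: gen_commute | apply: span_word].
Qed.

Lemma mono_straighten x m :
  span_le (mdeg m) (gen x * mono m - ins_factor x (sorted_word m) *: mono (m + U_(x))%MM).
Proof. by rewrite /mono -ins_sorted_word -size_sorted_word; apply: ins_straighten. Qed.

Lemma mono_commute y m : span_le (mdeg m)
  (mono m * gen y - (\prod_(i < 6) qcomm q i y ^+ m i) *: (gen y * mono m)).
Proof.
have -> : \prod_(i < 6) qcomm q i y ^+ m i = \prod_(x <- sorted_word m) qcomm q x y.
  by rewrite [RHS]prod_count; apply: eq_bigr => i _; rewrite count_sorted_word.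
by rewrite -size_sorted_word; apply: word_commute.
Qed.

Fixpoint sort_factor (w : seq 'I_6) : F :=
  if w is x :: w' then sort_factor w' * ins_factor x (sorted_word (letters w')) else 1.

Lemma sort_factor_neq0 w : sort_factor w != 0.
Proof. by elim: w => [|x w IH] /=; rewrite ?oner_neq0 // mulf_neq0 // ins_factor_neq0. Qed.

Lemma word_mono w : span_le (size w).-1 (wordval w - sort_factor w *: mono (letters w)).
Proof.
elim: w => [|x w IH] /=.
  by rewrite letters_nil mono0 wordval_nil scale1r subrr; apply: span_le0.
rewrite wordval_cons letters_cons.
have -> : gen x * wordval w - (sort_factor w * ins_factor x (sorted_word (letters w))) *:
      mono (letters w + U_(x))%MM =
    gen x * (wordval w - sort_factor w *: mono (letters w))
    + sort_factor w *: (gen x * mono (letters w) - ins_factor x (sorted_word (letters w)) *: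
        mono (letters w + U_(x))%MM).
  by expand_products; lin_coef F; repeat split; ring.
apply: span_add; last by rewrite -(mdeg_letters w); apply/span_scale/mono_straighten.
case: w {IH} (IH) => [_|y w IH]; last exact: span_le_genM.
by rewrite letters_nil mono0 wordval_nil scale1r subrr mulr0; apply: span_le0.
Qed.

(* [phi] reads off the coefficients of the ordered monomials; it is provided
   by the polynomial representation, see [coords]. *)
Variable phi : D -> {mpoly F[6]}.
Hypothesis phiD : forall x y, phi (x + y) = phi x + phi y.
Hypothesis phiZ : forall c x, phi (c *: x) = c *: phi x.
Hypothesis phi_mono : forall m, phi (mono m) = 'X_[m].
Hypothesis msize_phi : forall d x, span_le d x -> (msize (phi x) <= d.+1)%N.

Lemma phi_sum I (r : seq I) (P : pred I) (f : I -> D) :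
  phi (\sum_(i <- r | P i) f i) = \sum_(i <- r | P i) phi (f i).
Proof.
elim: r => [|a r IH]; last by rewrite !big_cons; case: ifP => // _; rewrite phiD IH.
by rewrite !big_nil; have := phiZ 0 0; rewrite !scale0r.
Qed.

Lemma top_coef_eq0 n (e : 'X_{1..6} -> F) (x : 'I_6) :
  span_le n.+1 (\sum_(m : 'X_{1..6 < n.+2} | mdeg m == n.+1) e m *: mono (m + U_(x))%MM) ->
  forall m : 'X_{1..6 < n.+2}, mdeg m == n.+1 -> e m = 0.
Proof.
move=> /msize_phi; rewrite phi_sum => size_sum m0 dm0.
have : (\sum_(m : 'X_{1..6 < n.+2} | mdeg m == n.+1)
         phi (e m *: mono (m + U_(x))%MM))@_(m0 + U_(x))%MM = 0.
  apply/memN_msupp_eq0/msize_mdeg_ge; rewrite mdeg_addU (eqP dm0).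
  exact: size_sum.
rewrite raddf_sum (bigD1 m0) //= phiZ phi_mono mcoeffZ mcoeffX eqxx mulr1.
rewrite big1 ?addr0 // => m /andP [_ ne_m]; rewrite phiZ phi_mono mcoeffZ mcoeffX.
by rewrite eqm_add2r -bmeqP (negbTE ne_m) mulr0.
Qed.

Lemma top_decomposition n x : span_le n.+1 x -> exists c : 'X_{1..6} -> F,
  span_le n (x - \sum_(m : 'X_{1..6 < n.+2} | mdeg m == n.+1) c m *: mono m).
Proof.
elim=> [w le_w|x1 y1 _ [c1 s1] _ [c2 s2]|k x1 _ [c1 s1]].
- have [lt_w|ge_w] := ltnP (size w) n.+1.
    exists (fun _ => 0); rewrite big1 ?subr0; first exact: span_word.
    by move=> m _; rewrite scale0r.
  have sw : size w = n.+1 by apply/eqP; rewrite eqn_leq le_w ge_w.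
  exists (fun m => if m == letters w then sort_factor w else 0).
  have dw : (mdeg (letters w) < n.+2)%N by rewrite mdeg_letters sw.
  rewrite (bigD1 (BMultinom dw)) /=; last by rewrite mdeg_letters sw.
  rewrite eqxx big1 ?addr0; first by move: (word_mono w); rewrite sw.
  move=> m /andP [_ ne_m]; case: ifP => [/eqP em|]; last by rewrite scale0r.
  by move: ne_m; rewrite -(inj_eq val_inj) /= em eqxx.
- exists (fun m => c1 m + c2 m).
  rewrite (eq_bigr (fun m : 'X_{1..6 < n.+2} => c1 m *: mono m + c2 m *: mono m)); last first.
    by move=> m _; rewrite scalerDl.
  by rewrite big_split /= opprD addrACA; apply: span_add.
- exists (fun m => k * c1 m).
  rewrite (eq_bigr (fun m : 'X_{1..6 < n.+2} => k *: (c1 m *: mono m))); last first.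
    by move=> m _; rewrite scalerA.
  by rewrite -scaler_sumr -scalerBr; apply: span_scale.
Qed.

(* [mono m * gen x = commute_factor x m *: (gen x * mono m)] modulo lower degree. *)
Definition commute_factor (x : 'I_6) (m : 'X_{1..6}) : F := \prod_(i < 6) qcomm q i x ^+ m i.

Lemma central_top_commute n z (c : 'X_{1..6} -> F) x : central z ->
  span_le n (z - \sum_(m : 'X_{1..6 < n.+2} | mdeg m == n.+1) c m *: mono m) ->
  span_le n.+1 (\sum_(m : 'X_{1..6 < n.+2} | mdeg m == n.+1)
      (c m * (1 - commute_factor x m) * ins_factor x (sorted_word m)) *: mono (m + U_(x))%MM).
Proof.
move=> cz s_rest.
set h := \sum_(m : 'X_{1..6 < n.+2} | mdeg m == n.+1) c m *: mono m.
pose err (m : 'X_{1..6}) :=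
  (gen x * mono m - ins_factor x (sorted_word m) *: mono (m + U_(x))%MM)
  - (mono m * gen x - commute_factor x m *: (gen x * mono m))
  - commute_factor x m *: (gen x * mono m - ins_factor x (sorted_word m) *: mono (m + U_(x))%MM).
have e1 : \sum_(m : 'X_{1..6 < n.+2} | mdeg m == n.+1)
      (c m * (1 - commute_factor x m) * ins_factor x (sorted_word m)) *: mono (m + U_(x))%MM =
    \sum_(m : 'X_{1..6 < n.+2} | mdeg m == n.+1) c m *: (gen x * mono m - mono m * gen x)
    - \sum_(m : 'X_{1..6 < n.+2} | mdeg m == n.+1) c m *: err m.
  by rewrite -sumrB; apply: eq_bigr => m _; rewrite /err; lin_coef F; repeat split; ring.
have e2 : \sum_(m : 'X_{1..6 < n.+2} | mdeg m == n.+1)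
      c m *: (gen x * mono m - mono m * gen x) = gen x * h - h * gen x.
  rewrite /h mulr_sumr mulr_suml -sumrB; apply: eq_bigr => m _.
  by rewrite -scalerAr -scalerAl scalerBr.
have e3 : gen x * h - h * gen x = - (gen x * (z - h) - (z - h) * gen x).
  by rewrite mulrBr mulrBl -(cz (gen x)); lin_coef F; repeat split; ring.
rewrite e1 e2 e3; apply: span_leB.
  by apply/span_leN/span_leB; [apply: span_le_genM | apply: span_le_Mgen].
apply: span_le_sum => m /eqP dm; apply: span_scale; rewrite /err.
have := mono_straighten x m; have := mono_commute x m; rewrite dm => s_comm s_ins.
by apply/span_leB/span_scale/s_ins; apply: span_leB.
Qed.

Lemma central_top_factor n z (c : 'X_{1..6} -> F) x : central z ->
  span_le n (z - \sum_(m : 'X_{1..6 < n.+2} | mdeg m == n.+1) c m *: mono m) ->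
  forall m : 'X_{1..6 < n.+2}, mdeg m == n.+1 -> c m != 0 -> commute_factor x m = 1.
Proof.
move=> cz s_rest m dm cm_neq0.
have := @top_coef_eq0 n (fun m => c m * (1 - commute_factor x m) * ins_factor x (sorted_word m)) x
  (central_top_commute x cz s_rest) m dm.
move/eqP; rewrite !mulf_eq0 (negbTE cm_neq0) (negbTE (ins_factor_neq0 _ _)) orbF /=.
by rewrite subr_eq0 => /eqP <-.
Qed.

Lemma commute_factorA m : commute_factor iA m = (q ^+ 2) ^+ m iB * (q ^- 2) ^+ m iC.
Proof. by rewrite /commute_factor prod6 /qcomm /= !expr1n !mulr1 mul1r. Qed.

Lemma commute_factorC m : commute_factor iC m = (q ^+ 2) ^+ m iA * (q ^- 2) ^+ m iB.
Proof. by rewrite /commute_factor prod6 /qcomm /= !expr1n !mulr1. Qed.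

Lemma q2_exp_balance a b : (q ^+ 2) ^+ a * (q ^- 2) ^+ b = 1 -> a = b.
Proof.
move=> e; have q2b_neq0 : (q ^- 2) ^+ b != 0 by rewrite expf_neq0 // invr_eq0 expf_neq0.
have : q ^+ (2 * a) = q ^+ (2 * b).
  rewrite !exprM; apply: (mulIf q2b_neq0).
  by rewrite e exprVn mulfV // expf_neq0 // expf_neq0.
by move/(expf_inj_nonroot q_neq0 q_nonroot)/eqP; rewrite eqn_pmul2l // => /eqP.
Qed.

Lemma central_top_balanced n z (c : 'X_{1..6} -> F) : central z ->
  span_le n (z - \sum_(m : 'X_{1..6 < n.+2} | mdeg m == n.+1) c m *: mono m) ->
  forall m : 'X_{1..6 < n.+2}, mdeg m == n.+1 -> c m != 0 -> m iA = m iB /\ m iB = m iC.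
Proof.
move=> cz s_rest m dm cm_neq0; split; apply: q2_exp_balance.
- by rewrite -commute_factorC; apply: (central_top_factor _ cz s_rest dm).
- by rewrite -commute_factorA; apply: (central_top_factor _ cz s_rest dm).
Qed.

Lemma casimir_sub_ABC : span_le 2 (Omega - q *: wordval [:: iA; iB; iC]).
Proof.
have -> : Omega - q *: wordval [:: iA; iB; iC] = q ^+ 2 *: (A * A) + q ^- 2 *: (B * B)
    + q ^+ 2 *: (C * C) - q *: (A * al) - q^-1 *: (B * be) - q *: (C * ga).
  by rewrite !wordval_cons wordval_nil mulr1 mulrA /casimir; lin_coef F; aw_field.
by repeat apply: span_leB || apply: span_add || apply: span_scale;
  apply: (span_leM (a := 1)); apply: span_le_letter; rewrite !inE eqxx ?orbT.
Qed.

Lemma casimir_span3 : span_le 3 Omega.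
Proof.
rewrite -[Omega](subrK (q *: wordval [:: iA; iB; iC])).
by apply: span_add; [apply: span_le_mono casimir_sub_ABC | apply/span_scale/span_word].
Qed.

Lemma casimir_pow_span k : span_le (3 * k) (Omega ^+ k).
Proof.
elim: k => [|k IH]; first by rewrite expr0; apply: span_le1.
by rewrite exprS mulnS; apply/span_leM/IH/casimir_span3.
Qed.

Lemma casimir_pow_lead k : span_le (3 * k).+2
  (Omega ^+ k.+1 - q ^+ k.+1 *: wordval (flatten (nseq k.+1 [:: iA; iB; iC]))).
Proof.
elim: k => [|k IH]; first by rewrite expr1; apply: casimir_sub_ABC.
set w3 := wordval [:: iA; iB; iC]; set wk := wordval (flatten (nseq k.+1 [:: iA; iB; iC])).
have -> : wordval (flatten (nseq k.+2 [:: iA; iB; iC])) = w3 * wk by rewrite -wordval_cat.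
have -> : Omega ^+ k.+2 - q ^+ k.+2 *: (w3 * wk) =
    (Omega - q *: w3) * Omega ^+ k.+1 + q *: (w3 * (Omega ^+ k.+1 - q ^+ k.+1 *: wk)).
  rewrite [Omega ^+ k.+2]exprS [q ^+ k.+2]exprS.
  by expand_products; lin_coef F; repeat split; ring.
apply: span_add.
  rewrite (_ : (3 * k.+1).+2 = 2 + 3 * k.+1)%N; last by rewrite addnC addn2.
  by apply/span_leM/casimir_pow_span/casimir_sub_ABC.
rewrite (_ : (3 * k.+1).+2 = 3 + (3 * k).+2)%N; last by rewrite mulnS.
by apply/span_scale/span_leM/IH/span_word.
Qed.

Lemma casimir_powM_lead k w : span_le (3 * k + size w).-1
  (Omega ^+ k * wordval w - q ^+ k *: wordval (flatten (nseq k [:: iA; iB; iC]) ++ w)).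
Proof.
case: k => [|k]; first by rewrite /= !expr0 mul1r scale1r subrr; apply: span_le0.
rewrite wordval_cat scalerAl -mulrBl (_ : (3 * k.+1 + size w).-1 = (3 * k).+2 + size w)%N.
  by apply: span_leM; [apply: casimir_pow_lead | apply: span_word].
by rewrite mulnS addSn addSn.
Qed.

Lemma balanced_mono_approx n m : mdeg m = n.+1 -> m iA = m iB -> m iB = m iC ->
  exists2 W, in_subalg Z W & span_le n (mono m - W).
Proof.
move=> dm eAB eBC; set k := m iA.
set wc := nseq (m ial) ial ++ nseq (m ibe) ibe ++ nseq (m iga) iga.
set u := flatten (nseq k [:: iA; iB; iC]) ++ wc.
have letters_u : letters u = m by apply: letters_balanced_word.
have size_u : size u = n.+1 by rewrite -dm -letters_u mdeg_letters.
have s_u := word_mono u; rewrite letters_u size_u /= in s_u.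
have size_u3 : (3 * k + size wc)%N = n.+1.
  by rewrite -dm -letters_u mdeg_letters /u size_cat size_flatten_nseq mulnC.
have s_W0 := casimir_powM_lead k wc; rewrite size_u3 /= -/u in s_W0.
have fu_neq0 : sort_factor u != 0 by apply: sort_factor_neq0.
have qk_neq0 : q ^+ k != 0 by apply: expf_neq0.
exists ((q ^+ k * sort_factor u)^-1 *: (Omega ^+ k * wordval wc)).
  apply/sa_scale/sa_mul; first by apply/in_subalgX/sa_gen; rewrite inE eqxx.
  rewrite /wc !wordval_cat !wordval_nseq.
  by apply: sa_mul; last apply: sa_mul; apply/in_subalgX/sa_gen; rewrite !inE eqxx ?orbT.
have -> : mono m - (q ^+ k * sort_factor u)^-1 *: (Omega ^+ k * wordval wc) =
    (q ^+ k * sort_factor u)^-1 *: (- (q ^+ k *: (wordval u - sort_factor u *: mono m))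
      - (Omega ^+ k * wordval wc - q ^+ k *: wordval u)).
  by lin_coef F; repeat split; field; rewrite fu_neq0 qk_neq0.
by apply/span_scale/span_leB => //; apply/span_leN/span_scale.
Qed.

Lemma approx_sum n I (r : seq I) (P : pred I) (f : I -> D) :
  (forall i, P i -> exists2 W, in_subalg Z W & span_le n (f i - W)) ->
  exists2 W, in_subalg Z W & span_le n (\sum_(i <- r | P i) f i - W).
Proof.
move=> approx_f; elim: r => [|a r [W ZW sW]].
  by exists 0; rewrite ?big_nil ?subr0; [apply: in_subalg0 | apply: span_le0].
rewrite big_cons; case: ifP => Pa; last by exists W.
have [Wa ZWa sWa] := approx_f a Pa; exists (Wa + W); first exact: sa_add.
by rewrite opprD addrACA; apply: span_add.
Qed.

Lemma Z_central x : in_subalg Z x -> central x.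
Proof.
apply: central_subalg => g; rewrite !inE => /or4P [] /eqP -> //.
exact: casimir_central.
Qed.

Lemma central_span_in_subalg n z : span_le n z -> central z -> in_subalg Z z.
Proof.
elim: n z => [|n IH] z.
  move=> sz _; elim: sz => [[|//] _|x y _ Zx _ Zy|c x _ Zx].
  - by rewrite wordval_nil; apply: sa_one.
  - exact: sa_add.
  - exact: sa_scale.
move=> sz cz; have [c s_rest] := top_decomposition sz.
set h := \sum_(m : 'X_{1..6 < n.+2} | mdeg m == n.+1) c m *: mono m.
have [W ZW sW] : exists2 W, in_subalg Z W & span_le n (h - W).
  apply: approx_sum => m dm.
  have [->|cm_neq0] := eqVneq (c m) 0.
    by exists 0; rewrite ?scale0r ?subr0; [apply: in_subalg0 | apply: span_le0].
  have [eAB eBC] := central_top_balanced cz s_rest dm cm_neq0.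
  have [W0 ZW0 sW0] := balanced_mono_approx (eqP dm) eAB eBC.
  by exists (c m *: W0); [apply: sa_scale | rewrite -scalerBr; apply: span_scale].
have Z_zW : in_subalg Z (z - W).
  apply: IH; last first.
    by apply: centralD => //; rewrite -scaleN1r; apply/centralZ/Z_central.
  have -> : z - W = (z - h) + (h - W) by rewrite addrA subrK.
  exact: span_add.
by rewrite -(subrK W z); apply: sa_add.
Qed.

Lemma span_le_exists x : exists d, span_le d x.
Proof.
elim: (gen_all x) => [g g_ABC||||].
- exists 1%N; apply: span_le_letter; move: g_ABC; rewrite !inE.
  by case/or3P => ->; rewrite ?orbT.
- by exists 0%N; apply: span_le1.
- move=> u v _ [d1 s1] _ [d2 s2]; exists (maxn d1 d2).
  by apply: span_add; [apply: span_le_mono s1 | apply: span_le_mono s2];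
    rewrite ?leq_maxl ?leq_maxr.
- by move=> u v _ [d1 s1] _ [d2 s2]; exists (d1 + d2)%N; apply: span_leM.
- by move=> c u _ [d s]; exists d; apply: span_scale.
Qed.

Theorem central_iff_in_subalg z : central z <-> in_subalg Z z.
Proof.
split; last exact: Z_central.
by move=> cz; have [d sz] := span_le_exists z; apply: central_span_in_subalg sz cz.
Qed.

End CenterOfPresentation.

(** * Independence of the ordered monomials *)

Lemma alg_hom_aw_params (F : fieldType) (q : F) (D E : algType F) (A B C : D)
    (f : D -> E) : alg_hom f ->
  [/\ f (aw_alpha q A B C) = aw_alpha q (f A) (f B) (f C),
       f (aw_beta q A B C) = aw_beta q (f A) (f B) (f C)
     & f (aw_gamma q A B C) = aw_gamma q (f A) (f B) (f C)].
Proof.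
case=> fD fM _ fZ; have fB x y : f (x - y) = f x - f y.
  by rewrite fD -scaleN1r fZ scaleN1r.
by split; rewrite /aw_alpha /aw_beta /aw_gamma /aw_cA /aw_cB /aw_cC fZ fD fZ fB !fZ !fM.
Qed.

Section Representation.
Variables (F : fieldType) (q : F).
Hypotheses (q_neq0 : q != 0) (q4_neq1 : q ^+ 4 != 1).
Local Notation t := (q ^+ 2 - q ^- 2).
Local Notation qq := (q + q^-1).
Local Notation V := {mpoly F[6]}.
Local Notation actB :=
  (actB (q ^+ 2) (q * t) (- (q * t / qq)) (- (q^-1 * t)) (q^-1 * t / qq) (q * t) (- (q * t / qq))).
Local Notation actC :=
  (actC (q ^+ 2) (q * t) (- (q * t / qq)) (- (q^-1 * t)) (q^-1 * t / qq) (q * t) (- (q * t / qq))).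

Fact q2_neq0 : q ^+ 2 != 0. Proof. exact: expf_neq0. Qed.

Program Definition repX (k : 'I_6) : endo F := @Endo F (fun v => 'X_k * v) _ _ _.
Next Obligation. exact: mulrDr. Qed.
Next Obligation. by rewrite scalerAr. Qed.
Next Obligation. by rewrite mulrCA. Qed.

Program Definition repB : endo F := @Endo F actB _ _ _.
Next Obligation. exact: actBD. Qed.
Next Obligation. exact: actBZ. Qed.
Next Obligation. exact: actB_mulX. Qed.

Program Definition repC : endo F := @Endo F actC _ _ _.
Next Obligation. exact: actCD. Qed.
Next Obligation. exact: actCZ. Qed.
Next Obligation. exact: actC_mulX. Qed.

Lemma repX_central (k : 'I_6) : (3 <= k)%N -> central (repX k).
Proof. by move=> k_ge3 f; apply: endo_ext => v /=; rewrite endo_mulX. Qed.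

Ltac endo_simpl := apply: endo_ext => v;
  rewrite /aw_cA /aw_cB /aw_cC !(endo_addE, endo_scaleE, endo_mulE, endo_oppE) /=.

Lemma rep_cA : aw_cA q (repX iA) repB repC = qq^-1 *: repX ial.
Proof. by endo_simpl; rewrite actC_actB ?q2_neq0 //; lin_coef F; aw_field. Qed.

Lemma rep_cB : aw_cB q (repX iA) repB repC = qq^-1 *: repX ibe.
Proof. by endo_simpl; rewrite actC_mulA; lin_coef F; aw_field. Qed.

Lemma rep_cC : aw_cC q (repX iA) repB repC = qq^-1 *: repX iga.
Proof. by endo_simpl; rewrite actB_mulA; lin_coef F; aw_field. Qed.

Lemma rep_alpha : aw_alpha q (repX iA) repB repC = repX ial.
Proof. by rewrite /aw_alpha rep_cA scalerA mulfV ?scale1r ?q_addV_neq0. Qed.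

Lemma rep_beta : aw_beta q (repX iA) repB repC = repX ibe.
Proof. by rewrite /aw_beta rep_cB scalerA mulfV ?scale1r ?q_addV_neq0. Qed.

Lemma rep_gamma : aw_gamma q (repX iA) repB repC = repX iga.
Proof. by rewrite /aw_gamma rep_cC scalerA mulfV ?scale1r ?q_addV_neq0. Qed.

Lemma rep_AW_rels : AW_rels q (repX iA) repB repC.
Proof. by split; rewrite ?rep_cA ?rep_cB ?rep_cC; apply/centralZ/repX_central. Qed.

Definition repgen (i : 'I_6) : endo F :=
  [:: repX iA; repB; repC; repX ial; repX ibe; repX iga]`_i.

Lemma repgen_X (x : 'I_6) (m : 'X_{1..6}) : (forall i : 'I_6, (i < x)%N -> m i = 0%N) ->
  repgen x 'X_[m] = 'X_[m + U_(x)].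
Proof.
rewrite /repgen; elim/ord6P: x => low /=.
- by rewrite XaddU.
- by rewrite actB_X bmono_noA //; apply: low.
- by rewrite actC_X cmono_noAB //; apply: low.
all: by rewrite XaddU.
Qed.

Lemma msize_repgen (x : 'I_6) (v : V) : (msize (repgen x v) <= (msize v).+1)%N.
Proof. by rewrite /repgen; elim/ord6P: x; rewrite /= ?msize_mulX ?msize_actB ?msize_actC. Qed.

Section Coordinates.
Variables (D : algType F) (A B C : D) (f : D -> endo F).
Hypotheses (f_hom : alg_hom f) (fA : f A = repX iA) (fB : f B = repB) (fC : f C = repC).
Local Notation al := (aw_alpha q A B C).
Local Notation be := (aw_beta q A B C).
Local Notation ga := (aw_gamma q A B C).

Definition coords (x : D) : V := f x 1.

Lemma coordsD x y : coords (x + y) = coords x + coords y.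
Proof. by case: f_hom => fD _ _ _; rewrite /coords fD. Qed.

Lemma coordsZ c x : coords (c *: x) = c *: coords x.
Proof. by case: f_hom => _ _ _ fZ; rewrite /coords fZ. Qed.

Lemma hom_gen i : f (gen A B C al be ga i) = repgen i.
Proof.
have [fal fbe fga] := alg_hom_aw_params q A B C f_hom.
rewrite /gen /repgen; elim/ord6P: i => //=.
- by rewrite fal fA fB fC rep_alpha.
- by rewrite fbe fA fB fC rep_beta.
- by rewrite fga fA fB fC rep_gamma.
Qed.

Lemma coords_cons x w :
  coords (wordval A B C al be ga (x :: w)) = repgen x (coords (wordval A B C al be ga w)).
Proof. by case: f_hom => _ fM _ _; rewrite wordval_cons /coords fM hom_gen. Qed.

Lemma coords_sorted w : sorted ord_le w -> coords (wordval A B C al be ga w) = 'X_[letters w].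
Proof.
elim: w => [|x w IH] sorted_xw.
  by case: f_hom => _ _ f1 _; rewrite wordval_nil /coords f1 letters_nil mpolyX0.
have sorted_w : sorted ord_le w := path_sorted sorted_xw.
have x_min : all (ord_le x) w := order_path_min ord_le_trans sorted_xw.
rewrite coords_cons IH // letters_cons repgen_X // => i lt_ix; rewrite mnmE.
apply/count_memPn/negP => /(allP x_min); rewrite /ord_le leqNgt.
by move/negP; apply.
Qed.

Lemma coords_mono m : coords (mono A B C al be ga m) = 'X_[m].
Proof. by rewrite /mono coords_sorted ?sorted_word_sorted // letters_sorted_word. Qed.

Lemma msize_coords_word w : (msize (coords (wordval A B C al be ga w)) <= (size w).+1)%N.
Proof.
elim: w => [|y w IH]; last by rewrite coords_cons (leq_trans (msize_repgen _ _)).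
by case: f_hom => _ _ f1 _; rewrite wordval_nil /coords f1 msize1.
Qed.

Lemma msize_coords d x : span_le A B C al be ga d x -> (msize (coords x) <= d.+1)%N.
Proof.
elim=> [w le_w|x1 y1 _ s1 _ s2|c x1 _ s1].
- by apply: leq_trans (msize_coords_word w) _; rewrite ltnS.
- by rewrite coordsD (leq_trans (msizeD_le _ _)) // geq_max s1 s2.
- by rewrite coordsZ (leq_trans (msizeZ_le _ _)).
Qed.

End Coordinates.
End Representation.

Theorem corollary8p3 (F : fieldType) (q : F) (D : algType F) (A B C : D) :
  q != 0 -> q ^+ 4 != 1 ->
  (forall n : nat, (0 < n)%N -> q ^+ n != 1) ->
  is_universal_AW q A B C ->
  forall z : D,
    central z <->
    in_subalg [:: aw_Omega q A B C; aw_alpha q A B C; aw_beta q A B C; aw_gamma q A B C] z.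
Proof.
move=> q_neq0 q4_neq1 q_nonroot [rels gen_all univ] z.
have [f [f_hom fA fB fC]] := univ _ _ _ _ (rep_AW_rels q_neq0 q4_neq1).
exact: (central_iff_in_subalg q_neq0 q4_neq1 q_nonroot
  (aw_alpha_central rels) (aw_beta_central rels) (aw_gamma_central rels)
  (aw_BA A B C q_neq0 q4_neq1) (aw_CA A B C q_neq0 q4_neq1) (aw_CB A B C q_neq0 q4_neq1)
  gen_all (coordsD f_hom) (coordsZ f_hom) (coords_mono q_neq0 q4_neq1 f_hom fA fB fC)
  (msize_coords q_neq0 q4_neq1 f_hom fA fB fC)).
Qed.
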